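(* Let $E$ be a real Hilbert space with $\dim(E)\ge2$, $h\in E$ a unit vector, and $f:\mathbb{R}_{\ge0}\to\mathbb{R}_{\ge0}$ with $f(d)=0$ iff $d=0$. Let $x\preceq_f y\iff f(\|y_\perp-x_\perp\|)\le y_h-x_h$, and assume $(E,\preceq_f)$ is a sponge. Then the following are equivalent: (1) the relation $\preceq_f$ is topologically closed in $E\times E$; (2) $f$ is lower semicontinuous; (3) $f$ is ascending (non-decreasing); (4) $f$ is increasing (strictly increasing); (5) $f$ is superadditive. If $\dim(E)\ge3$, all of these properties hold.
   Context: For $x\in E$ write $x=x_h h+x_\perp$ with $x_h=(x,h)$ and $x_\perp$ orthogonal to $h$. An oriented set $(S,\preceq)$ (with $\preceq$ reflexive and antisymmetric) is a sponge if every finite, nonempty, right-bounded subset has a join and every finite, nonempty, left-bounded subset has a meet. Here $P$ is right-bounded if some $s$ has $p\preceq s$ for all $p\in P$; the join of $P$ is an $x$ with $p\preceq x$ for all $p\in P$ and $x\preceq y$ whenever $p\preceq y$ for all $p\in P$; left-bounded and meet are dual. $f$ is superadditive if $f(x+y)\ge f(x)+f(y)$ for all $x,y\ge0$. *)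

From HB Require Import structures.
From mathcomp Require Import all_boot all_order all_algebra.
From mathcomp Require Import all_classical all_reals all_analysis.
Set Implicit Arguments. Unset Strict Implicit. Unset Printing Implicit Defensive.
Import Order.TTheory GRing.Theory Num.Theory.
Import numFieldNormedType.Exports.
Local Open Scope classical_set_scope.
Local Open Scope ring_scope.

Definition inner_product (R : realType) (E : normedModType R)
    (ip : E -> E -> R) : Prop :=
  [/\ (forall x y, ip x y = ip y x),
      (forall (a : R) x y z, ip (a *: x + y) z = a * ip x z + ip y z)
    & (forall x, `|x| = Num.sqrt (ip x x))].

Definition lin_indep (R : realType) (E : normedModType R) (n : nat)
    (v : 'I_n -> E) : Prop :=
  forall c : 'I_n -> R, \sum_(i < n) c i *: v i = 0 -> forall i, c i = 0.

Definition dim_ge (R : realType) (E : normedModType R) (n : nat) : Prop :=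
  exists v : 'I_n -> E, lin_indep v.

Definition hcomp (R : realType) (E : normedModType R) (ip : E -> E -> R)
  (h x : E) : R := ip x h.
Definition perp (R : realType) (E : normedModType R) (ip : E -> E -> R)
  (h x : E) : E := x - (ip x h) *: h.

Definition fle (R : realType) (E : normedModType R) (ip : E -> E -> R)
  (h : E) (f : R -> R) (x y : E) : Prop :=
  f `|perp ip h y - perp ip h x| <= hcomp ip h y - hcomp ip h x.

Definition oriented (T : Type) (le : T -> T -> Prop) : Prop :=
  (forall x, le x x) /\ (forall x y, le x y -> le y x -> x = y).

Definition is_join (T : Type) (le : T -> T -> Prop) (P : set T) (x : T) :=
  (forall p, P p -> le p x) /\ (forall y, (forall p, P p -> le p y) -> le x y).
Definition is_meet (T : Type) (le : T -> T -> Prop) (P : set T) (x : T) :=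
  (forall p, P p -> le x p) /\ (forall y, (forall p, P p -> le y p) -> le y x).

Definition sponge (T : Type) (le : T -> T -> Prop) : Prop :=
  [/\ oriented le,
      (forall P : set T, finite_set P -> P !=set0 ->
         (exists s, forall p, P p -> le p s) -> exists x, is_join le P x)
    & (forall P : set T, finite_set P -> P !=set0 ->
         (exists s, forall p, P p -> le s p) -> exists x, is_meet le P x)].

(* properties of f : R_{>=0} -> R_{>=0} (only values on [0,oo) matter) *)
Definition lsc_nonneg (R : realType) (f : R -> R) : Prop :=
  forall x, 0 <= x -> forall e, 0 < e -> exists2 d, 0 < d &
    forall y, 0 <= y -> `|y - x| < d -> f x - e < f y.
Definition ascending_nonneg (R : realType) (f : R -> R) : Prop :=
  forall a b, 0 <= a -> a <= b -> f a <= f b.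
Definition increasing_nonneg (R : realType) (f : R -> R) : Prop :=
  forall a b, 0 <= a -> a < b -> f a < f b.
Definition superadditive (R : realType) (f : R -> R) : Prop :=
  forall x y, 0 <= x -> 0 <= y -> f x + f y <= f (x + y).

From Pilot Require Import Defs.
From HB Require Import structures.
From mathcomp Require Import all_boot all_order all_algebra.
From mathcomp Require Import all_classical all_reals all_analysis.
From mathcomp Require Import ring lra.
Import Order.TTheory GRing.Theory Num.Theory.
Import numFieldNormedType.Exports.
Local Open Scope classical_set_scope.
Local Open Scope ring_scope.
Set Implicit Arguments. Unset Strict Implicit. Unset Printing Implicit Defensive.

(* For u orthogonal to h, the map fixing x_h and
   sending x_perp to 2u - x_perp is an order automorphism exchanging 0 and 2u,
   so the join of 0 and 2u has orthogonal part u; comparing it with the upper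
   bound u + v + S h gives f|u| + f|v| <= max (f|u + v|) (f|u - v|) for u, v
   orthogonal to h.  On a line e this yields ascending => superadditive at
   once and lsc => ascending by repeated halving; with a third orthonormal
   direction, u orthogonal to v gives f|u| + f|v| <= f|u + v|, hence
   monotonicity.  The relation is closed iff the epigraph of f is, i.e. iff f
   is lsc, and increasing => lsc compares the join of 0 and 2x e - d h, d the
   jump of f at x, with upper bounds built from points just right of x. *)

Lemma lin_indep_leq (R : realType) (E : normedModType R) n m
    (v : 'I_n -> E) (a : 'I_m -> E) (A : 'M[R]_(n, m)) :
  lin_indep v -> (forall k, v k = \sum_j A k j *: a j) -> (n <= m)%N.
Proof.
move=> indep vA; apply: leq_trans (rank_leq_col A).
rewrite row_leq_rank -kermx_eq0; apply/eqP/row_matrixP => i; rewrite row0.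
apply/rowP => k; rewrite mxE [RHS]mxE; move: k; apply: indep.
have KA j : \sum_k kermx A i k * A k j = 0.
  by have /matrixP/(_ i j) := mulmx_ker A; rewrite !mxE.
under eq_bigr do rewrite vA scaler_sumr.
rewrite exchange_big /= big1 // => j _.
under eq_bigr do rewrite scalerA.
by rewrite -scaler_suml KA scale0r.
Qed.

Section InnerProduct.
Variables (R : realType) (E : normedModType R) (ip : E -> E -> R).
Hypothesis ipP : inner_product ip.

Lemma ipC x y : ip x y = ip y x.
Proof. by case: ipP. Qed.

Lemma ipDl x y z : ip (x + y) z = ip x z + ip y z.
Proof. by case: ipP => _ ipL _; have := ipL 1 x y z; rewrite scale1r mul1r. Qed.

Lemma ip0l z : ip 0 z = 0.
Proof. by apply: (addrI (ip 0 z)); rewrite -ipDl !addr0. Qed.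

Lemma ipZl a x z : ip (a *: x) z = a * ip x z.
Proof. by case: ipP => _ ipL _; rewrite -[a *: x]addr0 ipL ip0l addr0. Qed.

Lemma ipNl x z : ip (- x) z = - ip x z.
Proof. by rewrite -scaleN1r ipZl mulN1r. Qed.

Lemma ipBl x y z : ip (x - y) z = ip x z - ip y z.
Proof. by rewrite ipDl ipNl. Qed.

Lemma ip_suml (I : Type) (r : seq I) (F : I -> E) z :
  ip (\sum_(i <- r) F i) z = \sum_(i <- r) ip (F i) z.
Proof. by elim/big_rec2: _ => [|i x y _ <-]; rewrite ?ip0l ?ipDl. Qed.

Lemma ipvv x : ip x x = `|x| ^+ 2.
Proof.
case: ipP => _ _ ->; rewrite sqr_sqrtr // leNgt; apply/negP => ipxx_lt0.
have /normr0_eq0 x0 : `|x| = 0.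
  by case: ipP => _ _ ->; apply/eqP; rewrite sqrtr_eq0 ltW.
by move: ipxx_lt0; rewrite x0 ip0l ltxx.
Qed.

Lemma normD2_orth u v : ip u v = 0 -> `|u + v| ^+ 2 = `|u| ^+ 2 + `|v| ^+ 2.
Proof.
move=> uv; rewrite -!ipvv ipDl ![ip _ (u + v)]ipC !ipDl uv ipC uv.
by rewrite add0r addr0.
Qed.

Definition orthonormal m (a : 'I_m -> E) :=
  forall i j, ip (a i) (a j) = (i == j)%:R.

Lemma orthonormal_ext m (a : 'I_m -> E) : orthonormal a -> dim_ge E m.+1 ->
  exists w, (forall i, ip w (a i) = 0) /\ `|w| = 1.
Proof.
move=> orth [v indep].
pose res u := u - \sum_j ip u (a j) *: a j.
have res_orth u i : ip (res u) (a i) = 0.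
  rewrite ipBl ip_suml (bigD1 i) //= big1 => [|j ji].
    by rewrite ipZl orth eqxx mulr1 addr0 subrr.
  by rewrite ipZl orth (negbTE ji) mulr0.
have [[i res_i] | res0] := pselect (exists i, res (v i) != 0).
  exists (`|res (v i)|^-1 *: res (v i)); split=> [j|].
    by rewrite ipZl res_orth mulr0.
  by rewrite normrZ normfV normr_id mulVf // normr_eq0.
suff : (m.+1 <= m)%N by rewrite ltnn.
apply: (lin_indep_leq (A := \matrix_(k, j) ip (v k) (a j)) indep) => k.
have /eqP/subr0_eq -> : res (v k) == 0 by apply/negPn/negP => ?; apply: res0; exists k.
by apply: eq_bigr => j _; rewrite mxE.
Qed.

End InnerProduct.

Lemma is_join_fixed (T : Type) (le : T -> T -> Prop) (P : set T) (s : T -> T) j :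
  (forall x y, le x y -> le y x -> x = y) -> involutive s ->
  (forall x y, le (s x) (s y) <-> le x y) -> (forall p, P p -> P (s p)) ->
  is_join le P j -> s j = j.
Proof.
move=> anti sK sle sP [ub least].
have le_j_sj : le j (s j).
  by apply: least => p Pp; rewrite -[p]sK sle; apply/ub/sP.
by apply: anti; [rewrite -[j in le _ j]sK sle | ].
Qed.

Lemma exists_pow2_ge (R : realType) (r : R) : exists n, r <= 2 ^+ n.
Proof.
have [r0 | r_gt0] := leP r 0; first by exists 0%N; rewrite expr0; lra.
exists (Num.Def.archi_bound r); apply/ltW/(lt_le_trans (archi_boundP (ltW r_gt0))).
by rewrite -natrX ler_nat ltnW // ltn_expl.
Qed.

Section RealConditions.
Variables (R : realType) (f : R -> R).
Hypothesis f_ge0 : forall d, 0 <= d -> 0 <= f d.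

Lemma increasing_ascending : increasing_nonneg f -> ascending_nonneg f.
Proof. by move=> inc a b a0; rewrite le_eqVlt => /predU1P[->|/(inc _ _ a0)/ltW]. Qed.

Lemma superadditive_increasing : (forall d, 0 <= d -> f d = 0 -> d = 0) ->
  superadditive f -> increasing_nonneg f.
Proof.
move=> f_eq0 sup a b a0 ab; have ba0 : 0 <= b - a by rewrite subr_ge0 ltW.
have := sup a (b - a) a0 ba0; rewrite [a + _]addrC subrK.
have : f (b - a) != 0 by apply/eqP => /(f_eq0 _ ba0)/eqP; rewrite subr_eq0 gt_eqF.
have := f_ge0 ba0; rewrite le_eqVlt eq_sym => /predU1P[->|]; first by rewrite eqxx.
by move=> ? _; lra.
Qed.

Lemma lsc_of_left_approx : f 0 = 0 -> ascending_nonneg f ->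
  (forall x L, 0 < x -> L < f x -> exists2 y, 0 <= y < x & L < f y) ->
  lsc_nonneg f.
Proof.
move=> f0 asc approx x x0 e e0; have [x_eq0 | x_gt0] := eqVneq x 0.
  by exists 1 => // y y0 _; rewrite x_eq0 f0 sub0r (lt_le_trans _ (f_ge0 y0)) ?oppr_lt0.
have x_pos : 0 < x by rewrite lt_neqAle eq_sym x_gt0.
have Lfx : f x - e < f x by rewrite ltrBlDr ltrDl.
have [y /andP[y0 yx] Ly] := approx x (f x - e) x_pos Lfx.
exists (x - y); first by rewrite subr_gt0.
move=> z z0; rewrite ltr_norml => /andP[zy _].
by apply: (lt_le_trans Ly); apply: asc => //; lra.
Qed.

Lemma lsc_closed_epigraph :
  lsc_nonneg f <-> closed [set p : R * R | f `|p.1| <= p.2].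
Proof.
split=> [lsc [r s] cl | cl x x0 e e0].
  apply/ler_addgt0Pr => e e0 /=.
  have [d d0 near_r] := lsc _ (normr_ge0 r) (e / 2) (divr_gt0 e0 (ltr0Sn _ 1)).
  have md0 : 0 < Num.min d (e / 2) by rewrite lt_min d0 divr_gt0.
  have [[r' s'] [/= fr's' [/= ball_r ball_s]]] := cl _ (nbhsx_ballx (r, s) _ md0).
  move: ball_r ball_s; rewrite -!ball_normE /ball_ /= !lt_min => /andP[rd _] /andP[_ se].
  have := near_r `|r'| (normr_ge0 _) (le_lt_trans (ler_dist_dist _ _) _).
  by rewrite distrC in rd => /(_ rd); rewrite ltr_norml in se; lra.
apply: contrapT => no_d.
suff : f `|x| <= f x - e by rewrite ger0_norm //; lra.
apply: (cl (x, f x - e)) => B /nbhs_ballP [r r0 rB].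
have [y [y0 yx fy]] : exists y, [/\ 0 <= y, `|y - x| < r & f y <= f x - e].
  apply: contrapT => no_y; apply: no_d; exists r => // y y0 yx.
  by rewrite ltNge; apply/negP => fy; apply: no_y; exists y.
exists (y, f x - e); split; first by rewrite /= ger0_norm.
apply: rB; split; rewrite /= -ball_normE /ball_ /= ?subrr ?normr0 // distrC //.
Qed.

Section Qcond.
Hypothesis f0 : f 0 = 0.
Hypothesis fQ : forall c t, 0 <= c -> 0 <= t ->
  f c + f t <= Num.max (f (c + t)) (f `|c - t|).

Lemma le_sub_pow2 X n : 0 <= X -> f (X - X / 2 ^+ n) <= f X.
Proof.
move=> X0; have pow_le k : X / 2 ^+ k <= X.
  by rewrite ler_pdivrMr ?exprn_gt0 // ler_peMr // exprn_ege1 // ler1n.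
elim: n => [|n IH]; first by rewrite expr0 divr1 subrr f0 f_ge0.
set t := X / 2 ^+ n.+1.
have t0 : 0 <= t by rewrite divr_ge0 ?exprn_ge0.
have tt : t + t = X / 2 ^+ n.
  by rewrite /t exprSr; field; rewrite expf_neq0.
have c0 : 0 <= X - t by rewrite subr_ge0 pow_le.
have := fQ c0 t0.
rewrite subrK -addrA -opprD tt ger0_norm ?subr_ge0 ?pow_le // max_l //.
by have := f_ge0 t0; lra.
Qed.

(* X is the first point of [a, b] where f drops to f b; halving towards X
   from 0 produces points of [a, X) where f <= f X, against f > f b there. *)
Lemma lsc_ascending : lsc_nonneg f -> ascending_nonneg f.
Proof.
move=> lsc a b a0 ab; rewrite leNgt; apply/negP => fba.
pose S := [set t | a <= t <= b /\ f t <= f b].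
have Sb : S b by split; rewrite ?ab lexx.
have S0 : S !=set0 by exists b.
have Slb : lbound S a by move=> t [/andP[]].
set X := inf S.
have aX : a <= X := lb_le_inf S0 Slb.
have XS t : S t -> X <= t by apply: ge_inf; exists a.
have X0 : 0 <= X := le_trans a0 aX.
have Xb : X <= b := XS b Sb.
have fX : f X <= f b.
  rewrite leNgt; apply/negP => fbX.
  have [d d0 near_X] : exists2 d, 0 < d & forall y, 0 <= y -> `|y - X| < d -> f b < f y.
    by have [|d d0] := lsc X X0 (f X - f b); [rewrite subr_gt0 | rewrite subKr; exists d].
  have XXd : X < X + d by rewrite ltrDl.
  have [t St tXd] := inf_lt S0 XXd.
  have Xt := XS t St; case: St => /andP[a_t _] ftb.
  have := near_X t (le_trans a0 a_t); rewrite ger0_norm ?subr_ge0 //; lra.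
have below t : a <= t -> t < X -> f b < f t.
  move=> a_t tX; rewrite ltNge; apply/negP => ftb.
  suff : X <= t by lra.
  by apply: XS; split => //; rewrite a_t ltW // (lt_le_trans tX Xb).
have aX' : a < X.
  by rewrite lt_neqAle aX andbT; apply/eqP => aXe; move: fX; rewrite -aXe; lra.
have [n pow_ge] := exists_pow2_ge (X / (X - a)).
have Xa : X / 2 ^+ n <= X - a.
  by rewrite ler_pdivrMr ?exprn_gt0 // mulrC -ler_pdivrMr ?subr_gt0.
have Xn_gt0 : 0 < X / 2 ^+ n by rewrite divr_gt0 ?exprn_gt0 // (le_lt_trans a0 aX').
have := le_sub_pow2 n X0; have := below (X - X / 2 ^+ n) _ _; lra.
Qed.

Lemma ascending_superadditive : ascending_nonneg f -> superadditive f.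
Proof.
move=> asc c t c0 t0; have := fQ c0 t0; rewrite max_l //.
by apply: asc; rewrite ?normr_ge0 // ler_norml; apply/andP; split; lra.
Qed.

End Qcond.
End RealConditions.

Section Geometry.
Variables (R : realType) (E : normedModType R) (ip : E -> E -> R) (h : E).
Variable f : R -> R.
Hypotheses (ipP : inner_product ip) (h1 : `|h| = 1).
Hypothesis f_ge0 : forall d, 0 <= d -> 0 <= f d.
Local Notation le := (fle ip h f).
Local Notation perp := (perp ip h).
Local Notation hcomp := (hcomp ip h).

Lemma iphh : ip h h = 1.
Proof. by rewrite (ipvv ipP) h1 expr1n. Qed.

Lemma ip_perp x : ip (perp x) h = 0.
Proof. by rewrite (ipBl ipP) (ipZl ipP) iphh mulr1 subrr. Qed.

Lemma perp_hcompK x : perp x + hcomp x *: h = x.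
Proof. exact: subrK. Qed.

Lemma hcomp_orth u s : ip u h = 0 -> hcomp (u + s *: h) = s.
Proof. by move=> uh; rewrite /Defs.hcomp (ipDl ipP) (ipZl ipP) uh iphh add0r mulr1. Qed.

Lemma perp_orth u s : ip u h = 0 -> perp (u + s *: h) = u.
Proof. by move=> uh; rewrite /Defs.perp -/(Defs.hcomp _ _ _) hcomp_orth ?addrK. Qed.

Lemma fle_orth u v s t : ip u h = 0 -> ip v h = 0 ->
  le (u + s *: h) (v + t *: h) <-> f `|v - u| <= t - s.
Proof. by move=> uh vh; rewrite /fle !perp_orth ?hcomp_orth. Qed.

Lemma fle0 v t : ip v h = 0 -> le 0 (v + t *: h) <-> f `|v| <= t.
Proof.
move=> vh; have -> : (0 : E) = 0 + 0 *: h by rewrite scale0r addr0.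
by rewrite fle_orth ?subr0 // (ip0l ipP).
Qed.

Lemma hcompB x y : hcomp (x - y) = hcomp x - hcomp y.
Proof. exact: ipBl. Qed.

Lemma perpB x y : perp (x - y) = perp x - perp y.
Proof.
rewrite /Defs.perp (ipBl ipP) scalerBl !opprB addrACA [RHS]addrACA.
by rewrite [- (_ *: h) - y]addrC.
Qed.

Lemma norm_perp_hcomp x : `|perp x| ^+ 2 + hcomp x ^+ 2 = `|x| ^+ 2.
Proof.
rewrite -[in RHS](perp_hcompK x) (normD2_orth ipP); last first.
  by rewrite (ipC ipP) (ipZl ipP) (ipC ipP) ip_perp mulr0.
by rewrite normrZ h1 mulr1 real_normK ?num_real.
Qed.

Lemma hcomp_continuous : continuous hcomp.
Proof.
move=> x; apply/cvgrPdist_lt => eps eps0; near=> y.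
rewrite -hcompB; apply: le_lt_trans (_ : `|x - y| < eps).
  rewrite -(ler_pXn2r (_ : 0 < 2)%N) ?nnegrE // real_normK ?num_real //.
  by have := norm_perp_hcomp (x - y); have := sqr_ge0 `|perp (x - y)|; lra.
by near: y; apply: cvgr_dist_lt.
Unshelve. all: by end_near.
Qed.

Lemma perp_continuous : continuous perp.
Proof.
move=> x; apply: cvgB; first exact: cvg_id.
by apply: cvgZr_tmp; exact: hcomp_continuous.
Qed.

Lemma closed_fle_of_epigraph : closed [set p : R * R | f `|p.1| <= p.2] ->
  closed [set p : E * E | le p.1 p.2].
Proof.
move=> cl; have -> : [set p : E * E | le p.1 p.2] =
    (fun p => (`|perp (p.2 - p.1)|, hcomp (p.2 - p.1))) @^-1` [set q | f `|q.1| <= q.2].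
  by rewrite predeqE => p /=; rewrite normr_id perpB hcompB.
apply: preimage_closed cl => p _.
pose sub (q : E * E) := q.2 - q.1.
have sub_cont : {for p, continuous sub} by exact: cvgB cvg_snd cvg_fst.
apply: (@cvg_pair _ _ _ _ (nbhs _) (nbhs _)).
- apply: cvg_norm; apply: (@continuous_comp _ _ _ sub perp) => //.
  exact: perp_continuous.
- by apply: (@continuous_comp _ _ _ sub hcomp) => //; exact: hcomp_continuous.
Qed.

Hypothesis spg : sponge le.

Lemma fle_anti x y : le x y -> le y x -> x = y.
Proof. by case: spg => -[_ anti] _ _; apply: anti. Qed.

Lemma join_exists p q : exists j, is_join le [set p; q] j.
Proof.
case: spg => _ join _; apply: join; first exact: finite_set2.
  by exists p; left.
pose S := Num.max (f `|perp p| + hcomp p) (f `|perp q| + hcomp q).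
exists (0 + S *: h) => r [|] ->; rewrite /fle perp_orth ?hcomp_orth ?(ip0l ipP) //;
  by rewrite sub0r normrN lerBrDr le_max lexx ?orbT.
Qed.

Section Reflection.
Variable u : E.
Hypothesis uh : ip u h = 0.

Definition hreflect x := (u *+ 2 - perp x) + hcomp x *: h.

Lemma perp_hreflect x : perp (hreflect x) = u *+ 2 - perp x.
Proof.
by rewrite perp_orth // (ipBl ipP) ip_perp mulr2n (ipDl ipP) uh addr0 subr0.
Qed.

Lemma hcomp_hreflect x : hcomp (hreflect x) = hcomp x.
Proof.
by rewrite hcomp_orth // (ipBl ipP) ip_perp mulr2n (ipDl ipP) uh addr0 subr0.
Qed.

Lemma hreflectK : involutive hreflect.
Proof.
by move=> x; rewrite {1}/hreflect perp_hreflect hcomp_hreflect subKr perp_hcompK.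
Qed.

Lemma fle_hreflect x y : le (hreflect x) (hreflect y) <-> le x y.
Proof.
rewrite /fle !perp_hreflect !hcomp_hreflect [u *+ 2 - perp y]addrC addrKA.
by rewrite opprK addrC distrC.
Qed.

(* hreflect is an order automorphism exchanging 0 and 2u, hence fixes their
   join. *)
Lemma perp_join_sym j : is_join le [set 0; u *+ 2] j -> perp j = u.
Proof.
move=> jJ; have sym_j : hreflect j = j.
  apply: is_join_fixed fle_anti hreflectK fle_hreflect _ jJ => _ [|] ->.
    by right; rewrite /hreflect /Defs.perp /Defs.hcomp (ip0l ipP) scale0r !subr0 addr0.
  left; rewrite /hreflect /Defs.perp /Defs.hcomp mulr2n (ipDl ipP) uh addr0.
  by rewrite scale0r subr0 subrr add0r.
have pj : perp j = u *+ 2 - perp j by rewrite -perp_hreflect sym_j.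
have /eqP : perp j *+ 2 = u *+ 2 by rewrite mulr2n {1}pj subrK.
rewrite -[perp j *+ 2]scaler_nat -[u *+ 2]scaler_nat => /eqP.
by apply: scalerI; rewrite pnatr_eq0.
Qed.

End Reflection.

Lemma join0_coords w s j : ip w h = 0 -> is_join le [set 0; w + s *: h] j ->
  [/\ f `|perp j| <= hcomp j, f `|perp j - w| <= hcomp j - s
    & forall v t, ip v h = 0 -> f `|v| <= t -> f `|v - w| <= t - s ->
        f `|v - perp j| <= t - hcomp j].
Proof.
move=> wh [ub least]; rewrite -(perp_hcompK j) in ub least.
have jh := ip_perp j.
split.
- by rewrite -fle0 //; apply: ub; left.
- by rewrite -fle_orth //; apply: ub; right.
- move=> v t vh v0 vw; rewrite -fle_orth //.
  by apply: least => _ [|] ->; rewrite ?fle0 ?fle_orth.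
Qed.

Lemma join_sym_bound u v : ip u h = 0 -> ip v h = 0 ->
  f `|u| + f `|v| <= Num.max (f `|u + v|) (f `|u - v|).
Proof.
move=> uh vh; have u2h : ip (u *+ 2) h = 0.
  by rewrite mulr2n (ipDl ipP) uh addr0.
have [j jJ] := join_exists 0 (u *+ 2).
have pj := perp_join_sym uh jJ.
have jJ0 : is_join le [set 0; u *+ 2 + 0 *: h] j by rewrite scale0r addr0.
have [j0 _ jV] := join0_coords u2h jJ0; rewrite pj in j0 jV.
set S := Num.max _ _.
have Suv : f `|u + v| <= S by rewrite le_max lexx.
have Svu : f `|v - u| <= S by rewrite distrC le_max lexx orbT.
have uvh : ip (u + v) h = 0 by rewrite (ipDl ipP) uh vh addr0.
have := jV _ S uvh Suv; rewrite [u + v]addrC mulr2n addrKA addrK subr0.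
by move=> /(_ Svu); lra.
Qed.

Lemma orth_superadditive u v : ip u h = 0 -> ip v h = 0 -> ip u v = 0 ->
  f `|u| + f `|v| <= f `|u + v|.
Proof.
move=> uh vh uv; have /eqP : `|u - v| ^+ 2 = `|u + v| ^+ 2.
  rewrite !(normD2_orth ipP) ?normrN // ipC // (ipNl ipP) ipC // uv oppr0 //.
rewrite eqrXn2 // => /eqP uvE.
by have := join_sym_bound uh vh; rewrite uvE maxxx.
Qed.

Section Plane.
Variable e : E.
Hypotheses (eh : ip e h = 0) (e1 : `|e| = 1).

Lemma ipZeh c : ip (c *: e) h = 0.
Proof. by rewrite (ipZl ipP) eh mulr0. Qed.

Lemma normZe c : `|c *: e| = `|c|.
Proof. by rewrite normrZ e1 mulr1. Qed.

Lemma join_bound_line c t : 0 <= c -> 0 <= t ->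
  f c + f t <= Num.max (f (c + t)) (f `|c - t|).
Proof.
move=> c0 t0; have := join_sym_bound (ipZeh c) (ipZeh t).
by rewrite -scalerDl -scalerBl !normZe (ger0_norm c0) (ger0_norm t0) ger0_norm ?addr_ge0.
Qed.

Lemma ascending_of_orth3 w : ip w h = 0 -> ip w e = 0 -> `|w| = 1 ->
  ascending_nonneg f.
Proof.
move=> wh we w1 a b a0 ab; have b0 := le_trans a0 ab.
set c := Num.sqrt (b ^+ 2 - a ^+ 2); have c0 : 0 <= c := sqrtr_ge0 _.
have normZw : `|c *: w| = c by rewrite normrZ w1 mulr1 ger0_norm.
have cw_h : ip (c *: w) h = 0 by rewrite (ipZl ipP) wh mulr0.
have ae_cw : ip (a *: e) (c *: w) = 0.
  by rewrite (ipZl ipP) (ipC ipP) (ipZl ipP) we !mulr0.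
have ae_cw_b : `|a *: e + c *: w| = b.
  apply/eqP; rewrite -(eqrXn2 (_ : 0 < 2)%N) // (normD2_orth ipP) //.
  by rewrite normZe normZw ger0_norm // sqr_sqrtr ?subrKC // subr_ge0; nra.
have := orth_superadditive (ipZeh a) cw_h ae_cw.
by rewrite ae_cw_b normZe normZw ger0_norm //; have := f_ge0 c0; lra.
Qed.

Lemma closed_epigraph_of_fle : closed [set p : E * E | le p.1 p.2] ->
  closed [set p : R * R | f `|p.1| <= p.2].
Proof.
move=> cl; have -> : [set p : R * R | f `|p.1| <= p.2] =
    (fun p => (0, p.1 *: e + p.2 *: h)) @^-1` [set p | le p.1 p.2].
  by rewrite predeqE => p /=; rewrite fle0 ?ipZeh ?normZe.
apply: preimage_closed cl => p _.
apply: (@cvg_pair _ _ _ _ (nbhs _) (nbhs _)) => /=; first exact: cvg_cst.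
by apply: cvgD; apply: cvgZr_tmp; [exact: cvg_fst | exact: cvg_snd].
Qed.

(* r is the right limit of f at x.  If f <= L on [0, x), the join of 0 and
   (2x) e + (L - r) h has height s > L, yet lies below t e + S h, where
   t = 2x - z for z slightly right of x and S < s. *)
Lemma left_approx_of_increasing x L :
  increasing_nonneg f -> 0 < x -> L < f x -> exists2 y, 0 <= y < x & L < f y.
Proof.
move=> inc x0 Lfx; apply: contrapT => no_y.
have fL y : 0 <= y -> y < x -> f y <= L.
  by move=> y0 yx; rewrite leNgt; apply/negP => Ly; apply: no_y; exists y; rewrite ?y0.
have asc := increasing_ascending inc.
pose T := [set f z | z in [set z | x < z]].
have T0 : T !=set0 by exists (f (x + 1)), (x + 1); rewrite //= ltrDl.
have Tlb : lbound T (f x) by move=> _ [z /= xz <-]; apply: asc; rewrite ?ltW.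
set r := inf T.
have fx_r : f x <= r := lb_le_inf T0 Tlb.
have r_lt z : x < z -> r < f z.
  move=> xz; have xm : x < (x + z) / 2 by lra.
  have r_le : r <= f ((x + z) / 2).
    by apply: ge_inf; [exists (f x) | exists ((x + z) / 2)].
  by apply: (le_lt_trans r_le); apply: inc; lra.
have [j jJ] := join_exists 0 ((2 * x) *: e + (L - r) *: h).
have [j0 jq jV] := join0_coords (ipZeh _) jJ.
set a := perp j in j0 jq jV; set s := hcomp j in j0 jq jV.
have Ls : L < s.
  have [xa | ax] := leP x `|a|; first by have := asc _ _ (ltW x0) xa; lra.
  have : x < `|a - (2 * x) *: e|.
    have := lerB_dist ((2 * x) *: e) a; rewrite normZe gtr0_norm ?mulr_gt0 // distrC.
    lra.
  by move/r_lt; lra.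
have r_rs : r < r + (s - L) by rewrite ltrDl subr_gt0.
have [_ [z /= xz <-] fz] := inf_lt T0 r_rs.
pose z' := Num.min z (2 * x).
have xz' : x < z' by rewrite lt_min xz /=; lra.
have fz' : f z' <= f z by apply: asc; rewrite ?ge_min ?lexx //; lra.
pose t := 2 * x - z'.
have t0 : 0 <= t by rewrite subr_ge0 ge_min lexx orbT.
have ftL : f t <= L by apply: fL => //; rewrite /t; lra.
pose S := Num.max (f t) (f z' + (L - r)).
have := jV (t *: e) S (ipZeh t).
have St : f t <= S by rewrite le_max lexx.
have Sz : f z' <= S - (L - r) by rewrite lerBrDr le_max lexx orbT.
rewrite normZe ger0_norm // -scalerBl normZe /t addrAC subrr add0r normrN.
rewrite gtr0_norm ?(lt_trans x0) // => /(_ St Sz) fS.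
have : s <= S by have := f_ge0 (normr_ge0 (t *: e - a)); lra.
by rewrite le_max => /orP[]; lra.
Qed.

Lemma increasing_lsc : f 0 = 0 -> increasing_nonneg f -> lsc_nonneg f.
Proof.
move=> f0 inc; apply: lsc_of_left_approx (increasing_ascending inc) _ => //.
by move=> x L; apply: left_approx_of_increasing.
Qed.

End Plane.


End Geometry.

Unset Implicit Arguments.

Theorem mainTheorem16 (R : realType) (E : completeNormedModType R)
  (ip : E -> E -> R) (h : E) (f : R -> R) :
  inner_product ip ->
  dim_ge E 2 ->
  `|h| = 1 ->
  (forall d, 0 <= d -> 0 <= f d) ->
  (forall d, 0 <= d -> (f d = 0 <-> d = 0)) ->
  sponge (fle ip h f) ->
  let P1 := closed [set p : E * E | fle ip h f p.1 p.2] in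
  let P2 := lsc_nonneg f in
  let P3 := ascending_nonneg f in
  let P4 := increasing_nonneg f in
  let P5 := superadditive f in
  [/\ (P1 <-> P2), (P2 <-> P3), (P3 <-> P4), (P4 <-> P5)
    & (dim_ge E 3 -> [/\ P1, P2, P3, P4 & P5])].
Proof.
move=> ipP dim2 h1 f_ge0 f_eq0 spg P1 P2 P3 P4 P5.
have f0 : f 0 = 0 by apply/f_eq0.
have [e [eh e1]] : exists e, ip e h = 0 /\ `|e| = 1.
  have [|e [eh e1]] := orthonormal_ext ipP (a := fun _ : 'I_1 => h) _ dim2.
    by move=> i j; rewrite !ord1 eqxx (ipvv ipP) h1 expr1n.
  by exists e; split => //; apply: eh ord0.
have fQ := join_bound_line ipP h1 spg eh e1.
have p12 : P1 -> P2.
  by move=> /(closed_epigraph_of_fle ipP h1 eh e1)/lsc_closed_epigraph.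
have p21 : P2 -> P1.
  by move=> /lsc_closed_epigraph/(closed_fle_of_epigraph ipP h1).
have p23 : P2 -> P3 := lsc_ascending f_ge0 f0 fQ.
have p35 : P3 -> P5 := ascending_superadditive fQ.
have p54 : P5 -> P4 := superadditive_increasing f_ge0 (fun d d0 => (f_eq0 d d0).1).
have p43 : P4 -> P3 := @increasing_ascending _ f.
have p42 : P4 -> P2 := increasing_lsc ipP h1 f_ge0 spg eh e1 f0.
split; [by split; auto..|] => dim3.
have [|w [wh w1]] := orthonormal_ext ipP (a := nth 0 [:: h; e]) _ dim3.
  move=> [[|[|//]] ?] [[|[|//]] ?] /=; rewrite ?(ipC ipP h e) ?eh //;
    by rewrite (ipvv ipP) ?h1 ?e1 expr1n.
have asc : P3 :=
  ascending_of_orth3 ipP h1 f_ge0 spg eh e1 (wh ord0) (wh (lift ord0 ord0)) w1.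
by split; auto.
Qed.
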